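(* Let $U \subset \mathbb{R}^n$ be a relatively compact open subanalytic set and $X = \overline{U} \setminus U$. Let $\pi: \mathbb{R}^n \to \mathbb{R}^{n-1}$ be the standard projection $\pi(x', x_n) = x'$, with $\pi|_X$ finite, and let $\Delta_\pi$ be its discriminant set. Fix $C, \varepsilon > 0$, let $x_0 \in U$, and suppose $\pi$ is $(C, \varepsilon)$-regular at $x_0$ with respect to $X$. Write $x_0' = \pi(x_0)$ and $\mathscr{C} = \{x_0 + \lambda(\eta, 1) : \eta \in \mathbb{R}^{n-1}, |\eta| < \varepsilon,\ \lambda \in \mathbb{R} \setminus \{0\}\}$. Let $\tilde C \ge 1$ be a constant such that $$\operatorname{dist}(x_0, X \setminus \mathscr{C}) \le \tilde C \operatorname{dist}(x_0', \pi(X \setminus \mathscr{C})) \le \tilde C \operatorname{dist}(x_0', \Delta_\pi).$$ Let $U'$ be an open subanalytic subset of $\pi(U) \setminus \Delta_\pi$ such that $x_0' \in U'$ and $$\operatorname{dist}(x_0', \Delta_\pi) \le \tilde C \operatorname{dist}(x_0', \partial U').$$ Let $U_1$ be the member of the cylindrical decomposition of $U \cap \pi^{-1}(U')$ containing $x_0$. Then $$\operatorname{dist}(x_0, X) \le \tilde C^2 \operatorname{dist}(x_0, \partial U_1).$$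
   Context: For an open set $W$, $\partial W = \overline{W} \setminus W$. Let $\operatorname{Reg}(X)$ be the set of points of $X$ where $X$ is locally a real analytic submanifold of dimension $n-1$, and $Z = X \setminus \operatorname{Reg}(X)$; the discriminant set $\Delta_\pi$ is the union of $\pi(Z)$ and the critical values of $\pi|_{\operatorname{Reg}(X)}$. The projection $\pi$ is $(C,\varepsilon)$-regular at $x_0$ with respect to $X$ if: (a) $\pi|_X$ is finite; (b) $X \cap \mathscr{C}$ is empty or a finite disjoint union of sets $\{x_0 + \lambda_i(\eta)(\eta, 1) : |\eta| < \varepsilon\}$ with $\lambda_i$ real analytic nowhere vanishing functions on $\{|\eta| < \varepsilon\}$; (c) $\|\operatorname{grad} \lambda_i(\eta)\| \le C|\lambda_i(\eta)|$ for all $|\eta| < \varepsilon$. Cylindrical decomposition: if $U'_0$ is the connected component of $U'$ containing $x_0'$, then $X \cap \pi^{-1}(U'_0)$ is the union of the graphs of finitely many bounded real analytic functions $\varphi_1 < \dots < \varphi_k$ on $U'_0$, and the member containing $x_0$ is the set $U_1 = \{(x', x_n) : x' \in U'_0,\ \varphi_i(x') < x_n < \varphi_{i+1}(x')\}$ that contains $x_0$. *)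

(* Points of R^n are row vectors 'rV[R]_(m+1), n = m+1. *)
From HB Require Import structures.
From mathcomp Require Import all_boot all_order all_algebra.
From mathcomp Require Import all_classical all_reals all_analysis.
Set Implicit Arguments. Unset Strict Implicit. Unset Printing Implicit Defensive.
Import Order.TTheory GRing.Theory Num.Theory.
Import numFieldNormedType.Exports.
Local Open Scope classical_set_scope.
Local Open Scope ring_scope.

Section Defs.
Variable R : realType.

Definition enorm k (v : 'rV[R]_k) : R := Num.sqrt (\sum_(i < k) v 0 i ^+ 2).

(* Euclidean distance from a point to a set, in \bar R (dist(x, set0) = +oo) *)
Definition set_edist k (x : 'rV[R]_k) (A : set 'rV[R]_k) : \bar R :=
  ereal_inf [set (enorm (x - a))%:E | a in A].

Definition bdry k (W : set 'rV[R]_k) : set 'rV[R]_k := closure W `\` W.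

Definition psum k (c : ('I_k -> nat) -> R) (a x : 'rV[R]_k) (N : nat) : R :=
  \sum_(al : {ffun 'I_k -> 'I_N})
     c (fun i => nat_of_ord (al i)) * \prod_(i < k) (x 0 i - a 0 i) ^+ (al i).

Definition pabssum k (c : ('I_k -> nat) -> R) (a x : 'rV[R]_k) (N : nat) : R :=
  \sum_(al : {ffun 'I_k -> 'I_N})
     `|c (fun i => nat_of_ord (al i))| * \prod_(i < k) `|x 0 i - a 0 i| ^+ (al i).

Definition analytic_on k (D : set 'rV[R]_k) (f : 'rV[R]_k -> R) : Prop :=
  forall a, D a -> exists r : R, 0 < r /\ exists c : ('I_k -> nat) -> R,
    forall x, D x -> enorm (x - a) < r ->
      (exists M : R, forall N, pabssum c a x N <= M) /\
      (psum c a x N @[N --> \oo] --> f x).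

Definition semianalytic k (A : set 'rV[R]_k) : Prop :=
  forall p : 'rV[R]_k, exists V : set 'rV[R]_k, open V /\ V p /\
    exists (np q : nat) (f : nat -> 'rV[R]_k -> R) (g : nat -> nat -> 'rV[R]_k -> R),
      (forall i, (i < np)%N -> analytic_on V (f i)) /\
      (forall i j, (i < np)%N -> (j < q)%N -> analytic_on V (g i j)) /\
      A `&` V = V `&` [set x | exists i, (i < np)%N /\ f i x = 0 /\
                               forall j, (j < q)%N -> 0 < g i j x].

Definition subanalytic k (A : set 'rV[R]_k) : Prop :=
  forall p : 'rV[R]_k, exists V : set 'rV[R]_k, open V /\ V p /\
    exists (l : nat) (B : set 'rV[R]_(k + l)),
      semianalytic B /\ compact (closure B) /\
      A `&` V = (@lsubmx R 1 k l) @` B.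

Variable m : nat.  (* n = m + 1 *)

Definition pi_proj (x : 'rV[R]_(m + 1)) : 'rV[R]_m := lsubmx x.
Definition lastc (x : 'rV[R]_(m + 1)) : R := rsubmx x 0 0.
Definition elast : 'rV[R]_(m + 1) := delta_mx 0 (rshift m ord0).

Definition grad k (f : 'rV[R]_k -> R) (y : 'rV[R]_k) : 'rV[R]_k :=
  \row_(j < k) derive f y (delta_mx 0 j : 'rV[R]_k).

(* X is near x a real analytic submanifold of dimension n-1, given by an
   analytic equation f with nonvanishing gradient *)
Definition hyp_chart (X : set 'rV[R]_(m + 1)) (x : 'rV[R]_(m + 1))
    (V : set 'rV[R]_(m + 1)) (f : 'rV[R]_(m + 1) -> R) : Prop :=
  open V /\ V x /\ analytic_on V f /\
  X `&` V = V `&` [set y | f y = 0] /\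
  (forall y, V y -> grad f y != 0).

Definition Reg (X : set 'rV[R]_(m + 1)) : set 'rV[R]_(m + 1) :=
  [set x | X x /\ exists V f, hyp_chart X x V f].

(* critical points of pi restricted to Reg(X): the tangent hyperplane
   ker (grad f) contains the vertical direction e_n *)
Definition crit_pts (X : set 'rV[R]_(m + 1)) : set 'rV[R]_(m + 1) :=
  [set x | X x /\ exists V f, hyp_chart X x V f /\ derive f x elast = 0].

(* discriminant set Delta_pi = pi(Z) u critical values of pi|Reg(X) *)
Definition discr (X : set 'rV[R]_(m + 1)) : set 'rV[R]_m :=
  pi_proj @` (X `\` Reg X) `|` pi_proj @` crit_pts X.

(* pi|X finite: pi|X has finite fibres (properness is automatic for compact X) *)
Definition proj_finite_on (X : set 'rV[R]_(m + 1)) : Prop :=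
  forall y : 'rV[R]_m, finite_set [set x | X x /\ pi_proj x = y].

Definition eball (eps : R) : set 'rV[R]_m := [set eta | enorm eta < eps].

Definition lift1 (eta : 'rV[R]_m) : 'rV[R]_(m + 1) := row_mx eta (const_mx 1).

Definition cone (x0 : 'rV[R]_(m + 1)) (eps : R) : set 'rV[R]_(m + 1) :=
  [set x0 + lam *: lift1 eta | eta in eball eps & lam in [set l : R | l != 0]].

Definition cone_sheet (x0 : 'rV[R]_(m + 1)) (eps : R) (lam : 'rV[R]_m -> R) :=
  [set x0 + lam eta *: lift1 eta | eta in eball eps].

Definition regular_proj (C eps : R) (x0 : 'rV[R]_(m + 1)) (X : set 'rV[R]_(m + 1)) :=
  proj_finite_on X /\
  exists (k : nat) (lam : nat -> 'rV[R]_m -> R),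
    (forall i, (i < k)%N -> analytic_on (eball eps) (lam i)) /\
    (forall i eta, (i < k)%N -> eball eps eta -> lam i eta != 0) /\
    (forall i j, (i < k)%N -> (j < k)%N -> i != j ->
        cone_sheet x0 eps (lam i) `&` cone_sheet x0 eps (lam j) = set0) /\
    X `&` cone x0 eps = [set x | exists i, (i < k)%N /\ cone_sheet x0 eps (lam i) x] /\
    (forall i eta, (i < k)%N -> eball eps eta ->
        enorm (grad (lam i) eta) <= C * `|lam i eta|).

End Defs.
Arguments pi_proj {R m} x.
Arguments lastc {R m} x.

From HB Require Import structures.
From mathcomp Require Import all_boot all_order all_algebra.
From mathcomp Require Import all_classical all_reals all_analysis.
From mathcomp Require Import lra.
Set Implicit Arguments. Unset Strict Implicit. Unset Printing Implicit Defensive.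
Import Order.TTheory GRing.Theory Num.Theory.
Import numFieldNormedType.Exports.
Local Open Scope classical_set_scope.
Local Open Scope ring_scope.

(* Chaining the hypotheses gives dist(x0, X) <= Ct^2 dist(x0', bdry U'), so it
   suffices that every y outside U1 satisfies |x0 - y| >= dist(x0, X) or
   |x0 - y| >= dist(x0', bdry U').  Otherwise some rho > |x0 - y| bounds both
   distances.  The ball of radius rho around x0' then lies in the connected
   component U0 of U' containing x0', and the segment [x0, y] misses X, hence
   misses the graphs of phi_j and phi_(j+1) over U0.  These functions are
   analytic, hence continuous, so by the intermediate value theorem
   x_n - phi_j(x') and phi_(j+1)(x') - x_n stay positive along the segment,
   and y lies in U1. *)

Section EuclideanNorm.
Variable R : realType.

Lemma enorm_ge0 k (v : 'rV[R]_k) : 0 <= enorm v.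
Proof. exact: sqrtr_ge0. Qed.

Lemma enormZ k (a : R) (v : 'rV[R]_k) : enorm (a *: v) = `|a| * enorm v.
Proof.
rewrite /enorm.
have -> : \sum_i (a *: v) 0 i ^+ 2 = a ^+ 2 * \sum_i v 0 i ^+ 2.
  by rewrite mulr_sumr; apply: eq_bigr => i _; rewrite mxE exprMn.
by rewrite sqrtrM ?sqr_ge0 // sqrtr_sqr.
Qed.

Lemma enormN k (v : 'rV[R]_k) : enorm (- v) = enorm v.
Proof. by rewrite -scaleN1r enormZ normrN normr1 mul1r. Qed.

Lemma enorm_distC k (u v : 'rV[R]_k) : enorm (u - v) = enorm (v - u).
Proof. by rewrite -opprB enormN. Qed.

Lemma enorm0 k : enorm (0 : 'rV[R]_k) = 0.
Proof. by rewrite -(scale0r (0 : 'rV[R]_k)) enormZ normr0 mul0r. Qed.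

Lemma enorm_lsubmx m (v : 'rV[R]_(m + 1)) : enorm (lsubmx v) <= enorm v.
Proof.
rewrite /enorm ler_sqrt; last by apply: sumr_ge0 => i _; exact: sqr_ge0.
rewrite [leRHS]big_split_ord /=.
have -> : \sum_(i < m) lsubmx v 0 i ^+ 2 = \sum_(i < m) v 0 (lshift 1 i) ^+ 2.
  by apply: eq_bigr => i _; rewrite mxE.
by rewrite lerDl; apply: sumr_ge0 => i _; exact: sqr_ge0.
Qed.

Lemma continuous_enorm k : continuous (@enorm R k).
Proof.
move=> v; apply: (continuous_comp (f := fun v : 'rV[R]_k => \sum_i v 0 i ^+ 2)
  (g := Num.sqrt)); last exact: sqrt_continuous.
apply: (@continuous_big _ _ +%R 0 xpredT add_continuous) => i _ w.
under eq_fun do rewrite expr2.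
by apply: continuousM; exact: coord_continuous.
Qed.

Lemma nbhs_enorm_lt k (x w : 'rV[R]_k) (rho : R) :
  enorm (x - w) < rho -> \forall z \near w, enorm (x - z) < rho.
Proof.
move=> xw.
have cE : {for w, continuous (fun z : 'rV[R]_k => enorm (x - z))}.
  apply: (continuous_comp (f := fun z : 'rV[R]_k => x - z)); last exact: continuous_enorm.
  exact: (@cvgB _ _ _ (nbhs w) _ (cst x) id x w (cvg_cst _) cvg_id).
exact: (@cvgr_lt _ _ _ _ (fun z : 'rV[R]_k => enorm (x - z)) _ cE rho xw).
Qed.

End EuclideanNorm.

Section SetDistance.
Variables (R : realType) (k : nat).
Implicit Types (x a : 'rV[R]_k) (A B : set 'rV[R]_k).

Lemma set_edist_le_enorm x a A : A a -> (set_edist x A <= (enorm (x - a))%:E)%E.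
Proof. by move=> Aa; apply: ereal_inf_lbound; exists a. Qed.

Lemma le_set_edist x A (z : \bar R) :
  (forall a, A a -> (z <= (enorm (x - a))%:E)%E) -> (z <= set_edist x A)%E.
Proof. by move=> zA; apply: le_ereal_inf_tmp => _ [a Aa <-]; exact: zA. Qed.

Lemma le_set_edist_sub x A B : A `<=` B -> (set_edist x B <= set_edist x A)%E.
Proof.
move=> AB; apply: ereal_inf_le_tmp => _ [a Aa <-]; exists a => //; exact: AB.
Qed.

Lemma le_mul_set_edist x A (z : \bar R) (c : R) : 0 < c ->
  (forall a, A a -> (z <= (c * enorm (x - a))%:E)%E) -> (z <= c%:E * set_edist x A)%E.
Proof.
move=> c0; case: z => [r | | ] zA; last exact: leNye.
- rewrite -lee_pdivrMl // -EFinM; apply: le_set_edist => a Aa.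
  by rewrite lee_fin ler_pdivrMl // -lee_fin; exact: zA.
- suff -> : A = set0 by rewrite /set_edist image_set0 ereal_inf0 gt0_muley ?lte_fin.
  by apply/seteqP; split => // a /zA; rewrite leye_eq.
Qed.

End SetDistance.

Lemma lt_ereal_exists_fin (R : realType) (a : R) (e : \bar R) :
  (a%:E < e)%E -> exists r : R, a < r /\ (r%:E <= e)%E.
Proof.
case: e => [r | | ] //; last by exists (a + 1); rewrite ltrDl ltr01 leey.
by rewrite lte_fin => ar; exists r.
Qed.

Section AnalyticContinuity.
Variable R : realType.

Lemma geometric_sum_le (q : R) n : 0 <= q -> q <= 1 / 2 ->
  \sum_(l < n.+1) q ^+ l <= 1 + 2 * q.
Proof.
move=> q0 q1.
suff : \sum_(l < n.+1) q ^+ l <= 1 + 2 * q - 2 * q ^+ n.+1.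
  by move/le_trans; apply; rewrite lerBlDr lerDl mulr_ge0 // exprn_ge0.
elim: n => [|n IH]; first by rewrite big_ord1 expr0 expr1; lra.
rewrite big_ord_recr /= (exprS q n.+1).
have h0 : 0 <= q ^+ n.+1 by rewrite exprn_ge0.
have h1 : 2 * (q * q ^+ n.+1) <= q ^+ n.+1 by nra.
lra.
Qed.

Lemma expr1D_sub1_le (u : R) k : 0 <= u -> u <= 1 -> (1 + u) ^+ k - 1 <= u * 2 ^+ k.
Proof.
move=> u0 u1; elim: k => [|k IH]; first by rewrite !expr0 mulr1; lra.
have h : (1 + u) ^+ k <= 2 ^+ k by apply: lerXn2r; rewrite ?nnegrE; lra.
rewrite !exprS mulrDl mul1r.
have h2 : u * (1 + u) ^+ k <= u * 2 ^+ k by apply: ler_wpM2l.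
lra.
Qed.

(* [\prod_i 0 ^+ al i] is the indicator of the zero multi-index. *)
Lemma sum_prod_expr_sub_le k N (q : R) : 0 <= q -> q <= 1 / 2 -> (0 < N)%N ->
  \sum_(al : {ffun 'I_k -> 'I_N}) (\prod_i q ^+ al i - \prod_i (0 : R) ^+ al i)
    <= 2 * q * 2 ^+ k.
Proof.
move=> q0 q1; case: N => [//|n] _.
rewrite sumrB -(bigA_distr_bigA (fun (i : 'I_k) (j : 'I_n.+1) => q ^+ j)).
rewrite -(bigA_distr_bigA (fun (i : 'I_k) (j : 'I_n.+1) => (0 : R) ^+ j)) /=.
rewrite !prodr_const card_ord.
have -> : \sum_(j < n.+1) (0 : R) ^+ j = 1.
  by rewrite big_ord_recl expr0 big1 ?addr0 // => i _; rewrite expr0n.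
rewrite expr1n.
have hA := @geometric_sum_le q n q0 q1.
have hA0 : 0 <= \sum_(j < n.+1) q ^+ j by apply: sumr_ge0 => i _; exact: exprn_ge0.
have /(_ ltac:(lra) ltac:(lra)) hb := @expr1D_sub1_le (2 * q) k.
have : (\sum_(j < n.+1) q ^+ j) ^+ k <= (1 + 2 * q) ^+ k.
  by apply: lerXn2r; rewrite ?nnegrE //; lra.
lra.
Qed.

Section PowerSeriesModulus.
Variables (k : nat) (c : ('I_k -> nat) -> R) (w : 'rV[R]_k) (s M : R).
Hypothesis s_ge0 : 0 <= s.
Hypothesis coef_le : forall N (al : {ffun 'I_k -> 'I_N}),
  `|c (fun i => nat_of_ord (al i))| * \prod_i s ^+ al i <= M.

Lemma psum_sub_center_le (x : 'rV[R]_k) (q : R) N : 0 <= q -> q <= 1 / 2 ->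
  (forall i, `|x 0 i - w 0 i| <= q * s) -> (0 < N)%N ->
  `|psum c w x N - psum c w w N| <= M * (2 * q * 2 ^+ k).
Proof.
move=> q0 q1 hx N0.
have M0 : 0 <= M.
  have := @coef_le 1 [ffun=> ord0 : 'I_1].
  apply: le_trans; apply: mulr_ge0 => //.
  by apply: prodr_ge0 => i _; exact: exprn_ge0.
rewrite /psum -sumrB; apply: (le_trans (ler_norm_sum _ _ _)).
apply: (@le_trans _ _ (M * \sum_(al : {ffun 'I_k -> 'I_N})
    (\prod_i q ^+ al i - \prod_i (0 : R) ^+ al i))); last first.
  by apply: ler_wpM2l => //; exact: sum_prod_expr_sub_le.
rewrite mulr_sumr; apply: ler_sum => al _.
rewrite -mulrBr normrM.
under [X in _ - X]eq_bigr do rewrite subrr.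
have [/forallP al0 | /forallPn [i0 al_i0]] := boolP [forall i, al i == 0 :> nat].
  by rewrite !big1 ?subrr ?normr0 ?mulr0 // => i _; rewrite (eqP (al0 i)) expr0.
have -> : \prod_i (0 : R) ^+ al i = 0.
  by rewrite (bigD1 i0) //= expr0n (negbTE al_i0) mul0r.
rewrite !subr0 normr_prod.
have hp : \prod_i `|(x 0 i - w 0 i) ^+ al i| <= \prod_i s ^+ al i * \prod_i q ^+ al i.
  rewrite -big_split /=; apply: ler_prod => i _.
  rewrite normrX exprn_ge0 //= -exprMn; apply: lerXn2r; rewrite ?nnegrE //.
    exact: mulr_ge0.
  by rewrite mulrC.
have hq : 0 <= \prod_i q ^+ al i by apply: prodr_ge0 => i _; exact: exprn_ge0.
apply: (le_trans (ler_wpM2l (normr_ge0 _) hp)).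
by rewrite mulrA; apply: ler_wpM2r.
Qed.

End PowerSeriesModulus.

Lemma pabssum_coef_le k (c : ('I_k -> nat) -> R) (w : 'rV[R]_k) (s M : R) :
  0 < s -> (forall N, pabssum c w (w + s *: const_mx 1) N <= M) ->
  forall N (al : {ffun 'I_k -> 'I_N}),
    `|c (fun i => nat_of_ord (al i))| * \prod_i s ^+ al i <= M.
Proof.
move=> s0 M_bound N al; apply: le_trans (M_bound N); rewrite /pabssum (bigD1 al) //=.
have -> : \prod_i `|(w + s *: const_mx 1) 0 i - w 0 i| ^+ al i = \prod_i s ^+ al i.
  by apply: eq_bigr => i _; rewrite !mxE mulr1 addrAC subrr add0r gtr0_norm.
rewrite lerDl; apply: sumr_ge0 => a _; apply: mulr_ge0 => //.
by apply: prodr_ge0 => i _; exact: exprn_ge0.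
Qed.

(* Evaluating the series at the corner [w + s(1,...,1)] of a polydisc bounds
   its coefficients, which yields a Lipschitz-type modulus at [w]. *)
Lemma analytic_on_modulus k (D : set 'rV[R]_k) (f : 'rV[R]_k -> R) (w : 'rV[R]_k) :
  analytic_on D f -> nbhs w D ->
  exists s M : R, 0 < s /\ \forall x \near w, forall q : R, 0 <= q -> q <= 1 / 2 ->
    (forall i, `|(x : 'rV[R]_k) 0 i - w 0 i| <= q * s) -> `|f x - f w| <= M * (2 * q * 2 ^+ k).
Proof.
move=> f_an Dw; have [r [r0 [c c_sum]]] := f_an w (nbhs_singleton Dw).
have [e e0 eD] := (nbhs_ballP _ _).1 Dw.
set E1 := enorm (const_mx 1 : 'rV[R]_k).
have E10 : 0 <= E1 by exact: enorm_ge0.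
set s := Num.min (e / 2) (r / (E1 + 1)).
have s0 : 0 < s by rewrite lt_min !divr_gt0 //; lra.
have se : s < e.
  have : s <= e / 2 by rewrite ge_min lexx.
  lra.
have sr : s * E1 < r.
  have : s <= r / (E1 + 1) by rewrite ge_min lexx orbT.
  rewrite ler_pdivlMr; [nra | lra].
pose xs := w + s *: const_mx 1.
have xsD : D xs.
  apply: eD; split => // i l; rewrite (ord1 i) /xs !mxE /ball /= mulr1.
  by rewrite opprD addrA subrr add0r normrN gtr0_norm.
have xsr : enorm (xs - w) < r by rewrite /xs addrAC subrr add0r enormZ gtr0_norm.
have [[M M_bound] _] := c_sum xs xsD xsr.
exists s, M; split => //.
have [_ cw] := c_sum w (nbhs_singleton Dw) (ltac:(by rewrite subrr enorm0)).
have near_w : \forall x \near w, D x /\ enorm (x - w) < r.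
  near=> x; split; first by near: x.
  by rewrite enorm_distC; near: x; apply: nbhs_enorm_lt; rewrite subrr enorm0.
near=> x => q q0 q1 hx.
have [Dx xw] : D x /\ enorm (x - w) < r by near: x.
have [_ cx] := c_sum x Dx xw.
apply: (ler_cvg_to (cvg_norm (cvgB cx cw)) (cvg_cst _)).
near=> N; rewrite /=; apply: (psum_sub_center_le (ltW s0) (pabssum_coef_le s0 M_bound)) => //.
by near: N; exists 1%N.
Unshelve. all: by end_near.
Qed.

Lemma analytic_on_continuous k (D : set 'rV[R]_k) (f : 'rV[R]_k -> R) (w : 'rV[R]_k) :
  analytic_on D f -> nbhs w D -> {for w, continuous f}.
Proof.
move=> f_an Dw; have [s [M [s0 mod_w]]] := analytic_on_modulus f_an Dw.
apply: (proj2 (@cvgrPdist_le _ _ _ (nbhs w) _ f (f w))) => e e0.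
set K := 2 * (`|M| + 1) * 2 ^+ k.
have K0 : 0 < K by rewrite !mulr_gt0 ?exprn_gt0 ?ltr_pwDr.
set q := Num.min (1 / 2) (e / K).
have q0 : 0 < q by rewrite lt_min (divr_gt0 e0 K0) andbT; lra.
have q1 : q <= 1 / 2 by rewrite ge_min lexx.
have qMe : M * (2 * q * 2 ^+ k) <= e.
  have qK : q * K <= e by rewrite -ler_pdivlMr // ge_min lexx orbT.
  have qk : 0 <= 2 * q * 2 ^+ k by rewrite !mulr_ge0 ?exprn_ge0 // ltW.
  have := ler_wpM2r qk (ler_norm M).
  rewrite /K in qK; lra.
apply: filterS2 mod_w (nbhsx_ballx w (q * s) (mulr_gt0 q0 s0)) => x mod_x [_ xw].
rewrite distrC; apply: le_trans qMe; apply: mod_x (ltW q0) q1 _ => i.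
by rewrite distrC; apply: ltW; exact: xw.
Qed.

End AnalyticContinuity.

Section Segments.
Variable R : realType.

Lemma continuous_segment k (x d : 'rV[R]_k) : continuous (fun t : R => x + t *: d).
Proof.
move=> t; exact: (@cvgD _ _ _ (nbhs t) _ (cst x) (fun t : R => t *: d) x (t *: d)
  (cvg_cst _) (@continuousZr_tmp _ _ _ id d t cvg_id)).
Qed.

Lemma enorm_sub_segment k (x y : 'rV[R]_k) (t : R) : 0 <= t <= 1 ->
  enorm (x - (x + t *: (y - x))) <= enorm (x - y).
Proof.
move=> /andP[t0 t1]; rewrite opprD addrA subrr add0r enormN enormZ ger0_norm //.
by rewrite (enorm_distC y) ler_piMl // enorm_ge0.
Qed.

(* The segment [x, w] misses [bdry U'], so [U'] is clopen in it; being
   connected, the segment lies in [U']. *)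
Lemma connected_component_ball k (U' : set 'rV[R]_k) (x w : 'rV[R]_k) (rho : R) :
  open U' -> U' x -> (rho%:E <= set_edist x (bdry U'))%E ->
  enorm (x - w) < rho -> connected_component U' x w.
Proof.
move=> oU' U'x rhoB xw.
pose S := (fun t : R => x + t *: (w - x)) @` `[0, 1]%classic.
have Scon : connected S.
  apply: connected_continuous_connected; first exact: segment_connected.
  exact/continuous_subspaceT/continuous_segment.
have S_ball p : S p -> enorm (x - p) < rho.
  move=> [t t01 <-]; apply: le_lt_trans xw; apply: enorm_sub_segment.
  by move: t01; rewrite /= in_itv.
have Sx : S x by exists 0; [rewrite /= in_itv /= lexx ler01 | rewrite scale0r addr0].
have Sw : S w by exists 1; [rewrite /= in_itv /= lexx ler01 | rewrite scale1r addrC subrK].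
have SU : S `<=` U'.
  suff <- : S `&` U' = S by move=> p [].
  apply: Scon; first by exists x.
  - by exists U'.
  - exists (closure U'); first exact: closed_closure.
    apply/seteqP; split => p [Sp Up]; split => //; first exact: subset_closure.
    apply: contrapT => nUp.
    have := le_trans rhoB (set_edist_le_enorm x (A := bdry U') (conj Up nUp)).
    by rewrite lee_fin leNgt S_ball.
exact: connected_component_max Sx SU Scon w Sw.
Qed.

Lemma nonvanishing_gt0 (g : R -> R) : {within `[0, 1], continuous g} ->
  (forall t, 0 <= t <= 1 -> g t != 0) -> 0 < g 0 -> 0 < g 1.
Proof.
move=> gc gne g0; rewrite ltNge; apply/negP => g1.
have hv : Num.min (g 0) (g 1) <= 0 <= Num.max (g 0) (g 1).
  by rewrite ge_min le_max g1 orbT /= (ltW g0).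
have [c c01 gc0] := @IVT R g 0 1 0 ler01 gc hv.
by move: c01 (gne c); rewrite in_itv /= gc0 eqxx => -> /(_ isT).
Qed.

Lemma segment_gt0 k (F : 'rV[R]_k -> R) (x y : 'rV[R]_k) :
  (forall t, 0 <= t <= 1 -> {for x + t *: (y - x), continuous F}) ->
  (forall t, 0 <= t <= 1 -> F (x + t *: (y - x)) != 0) -> 0 < F x -> 0 < F y.
Proof.
move=> Fc Fne Fx.
have := @nonvanishing_gt0 (fun t => F (x + t *: (y - x))).
rewrite scale0r addr0 scale1r (addrC x (y - x)) subrK; apply => //.
apply: continuous_in_subspaceT => t; rewrite inE /= in_itv /= => t01.
apply: (@continuous_comp _ _ _ (fun t : R => x + t *: (y - x)) F t).
  exact: continuous_segment.
exact: Fc.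
Qed.

End Segments.

Section Graphs.
Variables (R : realType) (m : nat).

Lemma continuous_lastc : continuous (@lastc R m).
Proof.
move=> x; apply: (continuous_comp (f := rsubmx) (g := fun M : 'rV[R]_1 => M 0 0)).
  exact: continuous_rsubmx.
exact: coord_continuous.
Qed.

Lemma continuous_graph_at (V : set 'rV[R]_m) (g : 'rV[R]_m -> R) (z : 'rV[R]_(m + 1)) :
  (forall w, V w -> {for w, continuous g}) -> V (pi_proj z) ->
  {for z, continuous (fun z => g (pi_proj z))}.
Proof.
move=> gc Vz; apply: (continuous_comp (f := pi_proj)); first exact: continuous_lsubmx.
exact: gc.
Qed.

Lemma between_graphs_segment (V : set 'rV[R]_m) (g h : 'rV[R]_m -> R)
    (x y : 'rV[R]_(m + 1)) :
  let z t := x + t *: (y - x) in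
  (forall t, 0 <= t <= 1 -> V (pi_proj (z t))) ->
  (forall w, V w -> {for w, continuous g}) ->
  (forall w, V w -> {for w, continuous h}) ->
  (forall t, 0 <= t <= 1 -> lastc (z t) != g (pi_proj (z t))) ->
  (forall t, 0 <= t <= 1 -> lastc (z t) != h (pi_proj (z t))) ->
  g (pi_proj x) < lastc x < h (pi_proj x) -> g (pi_proj y) < lastc y < h (pi_proj y).
Proof.
move=> z Vz gc hc g_ne h_ne /andP[gx xh]; apply/andP; split; rewrite -subr_gt0.
- apply: (@segment_gt0 _ _ (fun z => lastc z - g (pi_proj z)) x y); last by rewrite subr_gt0.
    move=> t t01; apply: continuousB; first exact: continuous_lastc.
    exact: continuous_graph_at gc (Vz t t01).
  by move=> t t01; rewrite subr_eq0 g_ne.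
- apply: (@segment_gt0 _ _ (fun z => h (pi_proj z) - lastc z) x y); last by rewrite subr_gt0.
    move=> t t01; apply: continuousB; last exact: continuous_lastc.
    exact: continuous_graph_at hc (Vz t t01).
  by move=> t t01; rewrite subr_eq0 eq_sym h_ne.
Qed.

End Graphs.

Section CylindricalCell.
Variables (R : realType) (m k j : nat) (U' : set 'rV[R]_m)
  (phi : nat -> 'rV[R]_m -> R) (X : set 'rV[R]_(m + 1)) (x0 : 'rV[R]_(m + 1)).
Let U0 := connected_component U' (pi_proj x0).
Let U1 := [set x | U0 (pi_proj x) /\
  phi j (pi_proj x) < lastc x < phi j.+1 (pi_proj x)].
Hypotheses (oU' : open U') (U'x0 : U' (pi_proj x0)).
Hypothesis phi_an : forall i, (i < k)%N -> analytic_on U0 (phi i).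
Hypothesis X_graphs : X `&` pi_proj @^-1` U0 =
  [set x | U0 (pi_proj x) /\ exists i, (i < k)%N /\ lastc x = phi i (pi_proj x)].
Hypotheses (jk : (j.+1 < k)%N) (U1x0 : U1 x0).

Lemma cell_contains_ball (rho : R) (y : 'rV[R]_(m + 1)) :
  (rho%:E <= set_edist x0 X)%E -> (rho%:E <= set_edist (pi_proj x0) (bdry U'))%E ->
  enorm (x0 - y) < rho -> U1 y.
Proof.
move=> rhoX rhoB x0y.
pose W := [set w | enorm (pi_proj x0 - w) < rho].
have WU0 : W `<=` U0 by move=> w; exact: connected_component_ball.
have phi_cont i w : (i < k)%N -> W w -> {for w, continuous (phi i)}.
  move=> ik Ww; apply: analytic_on_continuous (phi_an ik) _.
  exact: filterS WU0 (nbhs_enorm_lt Ww).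
pose z t := x0 + t *: (y - x0).
have z_near t : 0 <= t <= 1 -> enorm (x0 - z t) < rho.
  by move=> t01; apply: le_lt_trans x0y; exact: enorm_sub_segment.
have zW t : 0 <= t <= 1 -> W (pi_proj (z t)).
  move=> t01; rewrite /W /= /pi_proj -linearB /=.
  exact: le_lt_trans (enorm_lsubmx _) (z_near t t01).
have z_off i t : (i < k)%N -> 0 <= t <= 1 -> lastc (z t) != phi i (pi_proj (z t)).
  move=> ik t01; apply/eqP => z_on.
  have [Xz _] : (X `&` pi_proj @^-1` U0) (z t).
    by rewrite X_graphs; split; [exact: WU0 (zW t t01) | exists i].
  have := le_trans rhoX (set_edist_le_enorm x0 Xz).
  by rewrite lee_fin leNgt z_near.
have jk' : (j < k)%N := ltnW jk.
split; last first.
  apply: (between_graphs_segment (V := W)) U1x0.2 => // [w Ww|w Ww|t t01|t t01].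
  - exact: phi_cont.
  - exact: phi_cont.
  - exact: z_off.
  - exact: z_off.
have <- : z 1 = y by rewrite /z scale1r addrC subrK.
by apply/WU0/zW; rewrite ler01 lexx.
Qed.

Lemma edist_le_notin_cell (y : 'rV[R]_(m + 1)) : ~ U1 y ->
  (set_edist x0 X <= (enorm (x0 - y))%:E)%E \/
  (set_edist (pi_proj x0) (bdry U') <= (enorm (x0 - y))%:E)%E.
Proof.
move=> nU1y; set d := (enorm (x0 - y))%:E.
have [dX|yX] := leP (set_edist x0 X) d; first by left.
have [dB|yB] := leP (set_edist (pi_proj x0) (bdry U')) d; first by right.
have [|rho [yrho]] := @lt_ereal_exists_fin _ (enorm (x0 - y))
  (Order.min (set_edist x0 X) (set_edist (pi_proj x0) (bdry U'))).
  by rewrite lt_min yX yB.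
rewrite le_min => /andP[rhoX rhoB].
by case: nU1y; exact: cell_contains_ball rhoX rhoB yrho.
Qed.

End CylindricalCell.

Theorem lemma1 (R : realType) (m : nat)
  (U : set 'rV[R]_(m + 1)) (C eps Ct : R) (x0 : 'rV[R]_(m + 1))
  (U' : set 'rV[R]_m)
  (k : nat) (phi : nat -> 'rV[R]_m -> R) (j : nat) :
  let X := closure U `\` U in
  let Cn := cone x0 eps in
  let U0 := connected_component U' (pi_proj x0) in
  let U1 := [set x | U0 (pi_proj x) /\ phi j (pi_proj x) < lastc x < phi j.+1 (pi_proj x)] in
  open U -> compact (closure U) -> subanalytic U ->
  proj_finite_on X ->
  0 < C -> 0 < eps -> U x0 ->
  regular_proj C eps x0 X ->
  1 <= Ct ->
  (set_edist x0 (X `\` Cn) <= Ct%:E * set_edist (pi_proj x0) (pi_proj @` (X `\` Cn)))%E ->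
  (Ct%:E * set_edist (pi_proj x0) (pi_proj @` (X `\` Cn)) <= Ct%:E * set_edist (pi_proj x0) (discr X))%E ->
  open U' -> subanalytic U' -> U' `<=` pi_proj @` U `\` discr X -> U' (pi_proj x0) ->
  (set_edist (pi_proj x0) (discr X) <= Ct%:E * set_edist (pi_proj x0) (bdry U'))%E ->
  (* cylindrical decomposition over U0: graphs of bounded analytic phi_0 < ... < phi_(k-1) *)
  (forall i, (i < k)%N -> analytic_on U0 (phi i)) ->
  (forall i, (i < k)%N -> exists M : R, forall y, U0 y -> `|phi i y| <= M) ->
  (forall i y, (i.+1 < k)%N -> U0 y -> phi i y < phi i.+1 y) ->
  X `&` pi_proj @^-1` U0 = [set x | U0 (pi_proj x) /\ exists i, (i < k)%N /\ lastc x = phi i (pi_proj x)] ->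
  (* U1 is the member of the decomposition containing x0 *)
  (j.+1 < k)%N -> U1 x0 ->
  (set_edist x0 X <= (Ct ^+ 2)%:E * set_edist x0 (bdry U1))%E.
Proof.
move=> X Cn U0 U1 _ _ _ _ _ _ _ _ Ct1 hXC hCD oU' _ _ U'x0 hDB phi_an _ _ X_graphs jk U1x0.
have Ct0 : 0 < Ct by exact: lt_le_trans ltr01 Ct1.
have Ct2_gt0 : 0 < Ct ^+ 2 by rewrite exprn_gt0.
have hXB : (set_edist x0 X <= (Ct ^+ 2)%:E * set_edist (pi_proj x0) (bdry U'))%E.
  apply: le_trans (le_set_edist_sub x0 (_ : X `\` Cn `<=` X)) _; first by move=> ? [].
  rewrite expr2 EFinM -muleA; apply: le_trans hXC _; apply: le_trans hCD _.
  by apply: lee_wpmul2l; rewrite // lee_fin ltW.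
apply: (le_mul_set_edist Ct2_gt0) => y [_ nU1y].
have [hX|hB] := edist_le_notin_cell oU' U'x0 phi_an X_graphs jk U1x0 nU1y.
  by apply: le_trans hX _; rewrite lee_fin ler_peMl ?enorm_ge0 // expr_ge1 // ltW.
by apply: le_trans hXB _; rewrite [leRHS]EFinM lee_pmul2l ?lte_fin.
Qed.
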